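(* Let $0<p<q<\infty$. Then the norm of the embedding operator $I\colon\ell^{p,q}\to\ell^{p,\infty}$ is $$\|I\|=\Big(\frac{q}{p}\Big)^{1/q}.$$
   Context: For a scalar sequence $a=(a_n)$, its decreasing rearrangement is $a^*_n=\inf\{\omega>0:\#\{k:|a_k|>\omega\}\le n-1\}$. For $p,q\in(0,\infty]$, the Lorentz sequence space $\ell^{p,q}$ consists of all sequences $a$ with $\|a\|_{p,q}<\infty$, where $\|a\|_{p,q}=\big(\sum_{n=1}^\infty (a_n^* )^q n^{q/p-1}\big)^{1/q}$ if $q<\infty$, and $\|a\|_{p,\infty}=\sup_{n}n^{1/p}a_n^*$. The operator norm is $\|I\|=\sup_{\|a\|_{p,q}\le1}\|a\|_{p,\infty}$. *)

From mathcomp Require Import all_boot all_order all_algebra.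
From mathcomp Require Import all_classical all_reals all_analysis.
Import Order.TTheory GRing.Theory Num.Theory.
Local Open Scope classical_set_scope.
Local Open Scope ring_scope.

(* #{k : |a_k| > w} <= m  (the set may a priori be infinite, in which case
   this fails) *)
Definition count_gt_le {R : realType} (a : nat -> R) (w : R) (m : nat) : Prop :=
  exists s : seq nat, (size s <= m)%N /\ (forall k, w < `|a k| -> k \in s).

(* decreasing rearrangement a^*_n, n >= 1, as an extended real
   (inf of the empty set is +oo) *)
Definition drearr {R : realType} (a : nat -> R) (n : nat) : \bar R :=
  ereal_inf [set w%:E | w in [set w : R | 0 < w /\ count_gt_le a w n.-1]].

Definition lorentz_norm {R : realType} (p q : R) (a : nat -> R) : \bar R :=
  poweR (\sum_(1 <= n <oo)
           (poweR (drearr a n) q * (powR (n%:R) (q / p - 1))%:E))%E q^-1.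

Definition lorentz_norm_inf {R : realType} (p : R) (a : nat -> R) : \bar R :=
  ereal_sup [set ((powR (n%:R) p^-1)%:E * drearr a n)%E | n in [set n : nat | (0 < n)%N]].

Definition embedding_norm {R : realType} (p q : R) : \bar R :=
  ereal_sup [set lorentz_norm_inf p a | a in [set a : nat -> R | (lorentz_norm p q a <= 1)%E]].

(* For a in the unit ball of l^{p,q}, put r = q/p and S_n = sum_{k=1}^n k^{r-1}.
   Since a^* is nonincreasing, (a^*_n)^q S_n <= ||a||_{p,q}^q <= 1, and
   n^r <= r S_n, hence (n^{1/p} a^*_n)^q <= r.  Conversely, the constant
   sequence S_n^{-1/q} on n indices lies in the unit ball and has weak norm
   at least (n^r / S_n)^{1/q}, which exceeds any L < r^{1/q} for n large because
   r S_n <= (n+1)^r.  Both bounds on S_n follow by telescoping from the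
   convexity of t |-> t^r. *)

From mathcomp Require Import all_boot all_order all_algebra.
From mathcomp Require Import all_classical all_reals all_analysis.
From mathcomp Require Import ring lra.
Import Order.TTheory GRing.Theory Num.Theory.
Set Implicit Arguments.
Unset Strict Implicit.
Unset Printing Implicit Defensive.

Local Open Scope ring_scope.

Section PowerSums.
Variable R : realType.
Implicit Types (r x y L : R) (n : nat).

(* Young's inequality with exponents r and r/(r-1); equivalently, the tangent
   to t |-> t^r at x lies below the graph. *)
Lemma powR_tangent_le r x y : 1 < r -> 0 <= x -> 0 <= y ->
  r * x `^ (r - 1) * y <= y `^ r + (r - 1) * x `^ r.
Proof.
move=> r1 x0 y0; have r0 : 0 < r by lra.
have r'0 : 0 < r / (r - 1) by apply: divr_gt0; lra.
have conj : r^-1 + (r / (r - 1))^-1 = 1 by field; lra.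
have := conjugate_powR y0 (powR_ge0 x (r - 1)) r0 r'0 conj.
rewrite -powRrM mulrCA mulfV ?mulr1; last by rewrite gt_eqF // subr_gt0.
rewrite invf_div => young.
have -> : y `^ r + (r - 1) * x `^ r = r * (y `^ r / r + x `^ r * ((r - 1) / r)).
  by field; lra.
by rewrite mulrAC -mulrA ler_pM2l // mulrC.
Qed.

Lemma powR_addr1_ge r x : 1 < r -> 0 <= x ->
  x `^ r + r * x `^ (r - 1) <= (x + 1) `^ r.
Proof.
move=> r1 x0; have := powR_tangent_le r1 x0 (addr_ge0 x0 ler01).
rewrite mulrDr mulr1 -mulrA [x `^ _ * x]mulrC mulr_powRB1 //; lra.
Qed.

Lemma powR_addr1_le r x : 1 < r -> 0 <= x ->
  (x + 1) `^ r <= x `^ r + r * (x + 1) `^ (r - 1).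
Proof.
move=> r1 x0; have x10 : 0 <= x + 1 by lra.
have := powR_tangent_le r1 x10 x0.
have -> : r * (x + 1) `^ (r - 1) * x
        = r * ((x + 1) * (x + 1) `^ (r - 1)) - r * (x + 1) `^ (r - 1) by ring.
rewrite mulr_powRB1 //; lra.
Qed.

Definition weight_sum r n := \sum_(1 <= k < n.+1) k%:R `^ (r - 1).

Lemma weight_sum_ge0 r n : 0 <= weight_sum r n.
Proof. by apply: sumr_ge0 => k _; apply: powR_ge0. Qed.

Lemma weight_sumS r n :
  weight_sum r n.+1 = weight_sum r n + n.+1%:R `^ (r - 1).
Proof. by rewrite /weight_sum big_nat_recr. Qed.

Lemma weight_sum_lower r n : 1 < r -> n%:R `^ r <= r * weight_sum r n.
Proof.
move=> r1; elim: n => [|n IH].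
  by rewrite /weight_sum big_geq // mulr0 powR0 // gt_eqF // (lt_trans ltr01).
rewrite weight_sumS mulrDr -natr1.
have := powR_addr1_le r1 (ler0n R n); lra.
Qed.

Lemma weight_sum_upper r n : 1 < r -> r * weight_sum r n <= n.+1%:R `^ r.
Proof.
move=> r1; elim: n => [|n IH].
  by rewrite /weight_sum big_geq // mulr0 powR_ge0.
rewrite weight_sumS mulrDr -[n.+2%:R]natr1.
have := powR_addr1_ge r1 (ler0n R n.+1); lra.
Qed.

Lemma exists_weight_sum_lt r L : 1 < r -> 0 <= L -> L < r ->
  exists2 n, (0 < n)%N & L * weight_sum r n < n%:R `^ r.
Proof.
(* With X = (n+1)^{r-1}: r S_n <= (n+1) X and (n+1-r) X <= n^r, so it suffices
   that L (n+1) < r (n+1-r). *)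
move=> r1 L0 Lr; have rL : 0 < r - L by lra.
pose n := (Num.truncn (r * r / (r - L))).+1.
have r2n : r * r < (r - L) * n%:R.
  by rewrite [_ * n%:R]mulrC -ltr_pdivrMr // /n; apply: truncnS_gt.
exists n => //.
have up := weight_sum_upper n r1.
have low := powR_addr1_le r1 (ler0n R n).
have N0 : 0 <= n%:R + 1 :> R by rewrite addr_ge0.
have X0 : 0 < (n%:R + 1) `^ (r - 1) by rewrite powR_gt0 // ltr_pwDr.
rewrite -natr1 -(mulr_powRB1 N0 (lt_trans ltr01 r1)) in up low.
nra.
Qed.

Lemma weight_sum_gt0 r n : (0 < n)%N -> 0 < weight_sum r n.
Proof.
by case: n => // n _; rewrite weight_sumS ltr_wpDl ?weight_sum_ge0 ?powR_gt0.
Qed.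

Lemma exists_lt_root_weight_sum (p q L : R) : 0 < p -> p < q ->
  L < (q / p) `^ q^-1 ->
  exists2 n, (0 < n)%N & L < n%:R `^ p^-1 * weight_sum (q / p) n `^ (- q^-1).
Proof.
move=> p0 pq Lr; have q0 : 0 < q := lt_trans p0 pq.
have r1 : 1 < q / p by rewrite ltr_pdivlMr // mul1r.
have r0 : 0 < q / p := lt_trans ltr01 r1.
pose L' := Num.max L 0.
have L'0 : 0 <= L' by rewrite le_max lexx orbT.
have L'r : L' `^ q < q / p.
  have L'r : L' < (q / p) `^ q^-1 by rewrite gt_max Lr powR_gt0.
  have := gt0_ltr_powR q0 L'0 (powR_ge0 _ _) L'r.
  by rewrite -powRrM mulVf ?gt_eqF // powRr1 // ltW.
have [n n0 Sn] := exists_weight_sum_lt r1 (powR_ge0 L' q) L'r.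
exists n => //; apply: (@le_lt_trans _ _ L'); first by rewrite le_max lexx.
have S0 := weight_sum_gt0 (q / p) n0.
set S := weight_sum (q / p) n in Sn S0 *.
have powq : (n%:R `^ p^-1 * S `^ (- q^-1)) `^ q = n%:R `^ (q / p) / S.
  rewrite powRM ?powR_ge0 // -!powRrM mulNr mulVf ?gt_eqF //.
  by rewrite [p^-1 * q]mulrC powR_inv1 // ltW.
rewrite ltNge; apply/negP => le.
have := ge0_ler_powR (ltW q0) (mulr_ge0 (powR_ge0 _ _) (powR_ge0 _ _)) L'0 le.
by rewrite powq ler_pdivrMr // leNgt Sn.
Qed.

End PowerSums.

Section ExtendedReals.
Variable R : realType.
Local Open Scope ereal_scope.

Lemma ge0_lee_poweR (r : R) (x y : \bar R) : (0 <= r)%R -> 0 <= x -> x <= y ->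
  x `^ r <= y `^ r.
Proof.
move=> r0 x0 xy; apply: gt0_ler_poweR => //; rewrite in_itv /= leey andbT //.
exact: le_trans xy.
Qed.

Lemma lee_poweR_inv (q y : R) (x : \bar R) : (0 < q)%R -> 0 <= x -> (0 <= y)%R ->
  x `^ q <= y%:E -> x <= (y `^ q^-1)%:E.
Proof.
move=> q0 x0 y0 xy; rewrite -poweR_EFin.
rewrite -[x in x <= _](poweRe1 x0) -(mulfV (lt0r_neq0 q0)) poweRrM.
apply: ge0_lee_poweR => //; [by rewrite invr_ge0 ltW | exact: poweR_ge0].
Qed.

Lemma EFin_le_ereal_sup (S : set (\bar R)) (v : R) :
  (forall L : R, (L < v)%R -> exists2 y, S y & L%:E < y) -> v%:E <= ereal_sup S.
Proof.
move=> hS; rewrite leNgt; apply/negP => supv.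
have [L supL Lv] : exists2 L : R, ereal_sup S <= L%:E & (L < v)%R.
  move: supv; case: (ereal_sup S) => [e| |] //= ev.
  - by exists e; rewrite // -lte_fin.
  - by exists (v - 1)%R; rewrite ?leNye // ltrBlDr ltrDl.
have [y Sy Ly] := hS L Lv.
by have := ereal_sup_ubound Sy; rewrite leNgt (le_lt_trans supL Ly).
Qed.

End ExtendedReals.

Section Rearrangement.
Variable R : realType.
Implicit Types (a : nat -> R) (c : R) (m n : nat).
Local Open Scope ereal_scope.

Lemma drearr_ge0 a n : 0 <= drearr a n.
Proof. by apply: le_ereal_inf_tmp => _ [w [w0 _] <-]; rewrite lee_fin ltW. Qed.

Lemma drearr_nonincreasing a m n : (m <= n)%N -> drearr a n <= drearr a m.
Proof.
move=> mn; apply: ereal_inf_le_tmp => _ [w [w0 [s [hs hk]]] <-].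
exists w => //; split => //; exists s; split => //.
by apply: leq_trans hs _; rewrite -!subn1 leq_sub2r.
Qed.

Definition step_seq c n : nat -> R := fun k => if (k < n)%N then c else 0%R.

Lemma drearr_step_le c n m : (0 < c)%R -> drearr (step_seq c n) m <= c%:E.
Proof.
move=> c0; apply: ereal_inf_lbound; exists c => //; split => //.
exists [::]; split => // k; rewrite /step_seq; case: ifP => _.
  by rewrite gtr0_norm // ltxx.
by rewrite normr0 ltNge (ltW c0).
Qed.

Lemma drearr_step_eq0 c n m : (n < m)%N -> drearr (step_seq c n) m = 0.
Proof.
move=> nm; apply/eqP; rewrite eq_le drearr_ge0 andbT.
apply/lee_addgt0Pr => e e0; rewrite add0e.
apply: ereal_inf_lbound; exists e => //; split => //.
exists (iota 0 n); split; first by rewrite size_iota; case: m nm.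
move=> k; rewrite /step_seq mem_iota add0n; case: ifP => // _.
by rewrite normr0 ltNge (ltW e0).
Qed.

Lemma drearr_step_ge c n : (0 < c)%R -> (0 < n)%N -> c%:E <= drearr (step_seq c n) n.
Proof.
move=> c0 n0; apply: le_ereal_inf_tmp => _ [w [w0 [s [hs hk]]] <-].
rewrite lee_fin leNgt; apply/negP => wc.
have sub : {subset iota 0 n <= s}.
  move=> k; rewrite mem_iota add0n => /andP[_ kn]; apply: hk.
  by rewrite /step_seq kn gtr0_norm.
have := leq_trans (uniq_leq_size (iota_uniq 0 n) sub) hs.
by rewrite size_iota; case: (n) n0 => //= n' _; rewrite ltnn.
Qed.

Definition lorentz_term (p q : R) a n : \bar R :=
  drearr a n `^ q * (n%:R `^ (q / p - 1))%:E.

Lemma lorentz_term_ge0 p q a n : 0 <= lorentz_term p q a n.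
Proof. by rewrite mule_ge0 ?poweR_ge0 // lee_fin powR_ge0. Qed.

Lemma lorentz_partial_sum_le p q a n : (0 < q)%R ->
  \sum_(1 <= m < n.+1) lorentz_term p q a m <= lorentz_norm p q a `^ q.
Proof.
move=> q0; rewrite /lorentz_norm -poweRrM mulVf ?gt_eqF // poweRe1.
  by apply: nneseries_lim_ge => m _ _; apply: lorentz_term_ge0.
by apply: nneseries_ge0 => m _ _; apply: lorentz_term_ge0.
Qed.

Lemma drearr_pow_weight_sum_le p q a n : (0 < q)%R ->
  drearr a n `^ q * (weight_sum (q / p) n)%:E <=
  \sum_(1 <= m < n.+1) lorentz_term p q a m.
Proof.
move=> q0; rewrite /weight_sum -sumEFin ge0_sume_distrr; last first.
  by move=> m _; rewrite lee_fin powR_ge0.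
rewrite !big_nat; apply: lee_sum => m /andP[_ mn].
apply: lee_wpmul2r; first by rewrite lee_fin powR_ge0.
by rewrite ge0_lee_poweR ?drearr_ge0 ?drearr_nonincreasing // ltW.
Qed.

End Rearrangement.

Section Embedding.
Variable R : realType.
Variables p q : R.
Hypotheses (p0 : (0 < p)%R) (pq : (p < q)%R).
Local Open Scope ereal_scope.

Let q0 : (0 < q)%R. Proof. exact: lt_trans p0 pq. Qed.
Let r1 : (1 < q / p)%R. Proof. by rewrite ltr_pdivlMr // mul1r. Qed.

Lemma lorentz_norm_inf_le (a : nat -> R) :
  lorentz_norm p q a <= 1 -> lorentz_norm_inf p a <= ((q / p) `^ q^-1)%:E.
Proof.
move=> a1; apply: ge_ereal_sup => _ [n n0 <-].
set d := drearr a n.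
have dS : d `^ q * (weight_sum (q / p) n)%:E <= 1.
  apply: le_trans (drearr_pow_weight_sum_le p a n q0) _.
  apply: le_trans (lorentz_partial_sum_le p a n q0) _.
  by rewrite -(poweR1r q) ge0_lee_poweR ?poweR_ge0 // ltW.
apply: lee_poweR_inv => //; first by rewrite mule_ge0 ?drearr_ge0 // lee_fin powR_ge0.
  by rewrite divr_ge0 // ltW.
rewrite poweRM ?drearr_ge0 ?lee_fin ?powR_ge0 // poweR_EFin -powRrM [(p^-1 * q)%R]mulrC.
apply: (@le_trans _ _ (((q / p) * weight_sum (q / p) n)%:E * d `^ q)).
  by apply: lee_wpmul2r; [exact: poweR_ge0 | rewrite lee_fin weight_sum_lower].
rewrite EFinM -muleA [X in _ * X]muleC -[X in _ <= X]mule1.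
by apply: lee_wpmul2l; rewrite // lee_fin ltW // (lt_trans ltr01).
Qed.

Lemma lorentz_norm_step_le c n : (0 < c)%R ->
  lorentz_norm p q (step_seq c n) <= ((c `^ q * weight_sum (q / p) n) `^ q^-1)%:E.
Proof.
move=> c0; rewrite /lorentz_norm -poweR_EFin.
apply: ge0_lee_poweR; first by rewrite invr_ge0 ltW.
  by apply: nneseries_ge0 => m _ _; apply: lorentz_term_ge0.
rewrite (nneseries_split 1 n); last by move=> m _; apply: lorentz_term_ge0.
rewrite [X in _ + X]eseries0 ?adde0; last first.
  by move=> m nm _; rewrite drearr_step_eq0 // poweR0r ?mul0e // gt_eqF.
rewrite /weight_sum mulr_sumr -sumEFin add1n; apply: lee_sum => m _.
rewrite EFinM lee_wpmul2r ?lee_fin ?powR_ge0 // -poweR_EFin.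
by rewrite ge0_lee_poweR ?drearr_ge0 ?drearr_step_le // ltW.
Qed.

Lemma lorentz_norm_inf_gt (L : R) : (L < (q / p) `^ q^-1)%R ->
  exists2 a, lorentz_norm p q a <= 1 & L%:E < lorentz_norm_inf p a.
Proof.
move=> Lr; have [n n0 Ln] := exists_lt_root_weight_sum p0 pq Lr.
have S0 := weight_sum_gt0 (q / p) n0.
set S := weight_sum (q / p) n in Ln S0.
set c := (S `^ (- q^-1))%R in Ln.
have c0 : (0 < c)%R by apply: powR_gt0.
exists (step_seq c n).
  apply: le_trans (lorentz_norm_step_le n c0) _.
  have -> : (c `^ q * S = 1)%R.
    by rewrite -powRrM mulNr mulVf ?gt_eqF // powR_inv1 ?mulVf ?gt_eqF // ltW.
  by rewrite powR1.
apply: (@lt_le_trans _ _ ((n%:R `^ p^-1)%:E * drearr (step_seq c n) n)).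
  apply: (@lt_le_trans _ _ (n%:R `^ p^-1 * c)%:E); first by rewrite lte_fin.
  by rewrite EFinM lee_wpmul2l ?lee_fin ?powR_ge0 ?drearr_step_ge.
by apply: ereal_sup_ubound; exists n.
Qed.

End Embedding.

Theorem mainTheorem10 (R : realType) (p q : R) :
  0 < p -> p < q ->
  embedding_norm p q = (powR (q / p) q^-1)%:E.
Proof.
move=> p0 pq; apply/le_anti/andP; split.
  by apply: ge_ereal_sup => _ [a a1 <-]; exact: lorentz_norm_inf_le.
apply: EFin_le_ereal_sup => L Lr.
have [a a1 La] := lorentz_norm_inf_gt p0 pq Lr.
by exists (lorentz_norm_inf p a) => //; exists a.
Qed.
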